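(* Let $N\ge 1$, let $A, A_{\mathrm a}, A_{\mathrm{out}}\in\mathbb{R}^{2N\times 2N}$ be entrywise nonnegative column-stochastic matrices (i.e. $\mathbf{1}_{2N}^\top A=\mathbf{1}_{2N}^\top$, and likewise for $A_{\mathrm a}$, $A_{\mathrm{out}}$), let $P_{\mathrm{ON}}>0$ and $c_{\mathrm{ON}}:=P_{\mathrm{ON}}[\mathbf{1}_N^\top\ \mathbf{0}_N^\top]\in\mathbb{R}^{1\times 2N}$, and let $x_0\in\mathbb{R}^{2N}$ satisfy $x_0\succeq 0$, $\mathbf{1}_{2N}^\top x_0=1$ and $Ax_0=x_0$. Fix an index $j$ and let $x_{\mathrm{out}}=e_j\in\mathbb{R}^{2N}$ be the $j$-th standard basis vector. For $m\ge 1$ define the row vectors $h_m^\top=c_{\mathrm{ON}}A^m$, $h_{\mathrm a,m}^\top=c_{\mathrm{ON}}A_{\mathrm a}^m$, and the scalar $h^x_m=c_{\mathrm{ON}}(A_{\mathrm{out}}^m-A_{\mathrm a}^m)x_{\mathrm{out}}$. Fix an integer $T_{\mathrm{hold}}\ge 1$. Call $P_{\mathrm{hold}}\in\mathbb{R}$ feasible for the full problem if there exist $u[0],\dots,u[T_{\mathrm{hold}}-1]\in\mathbb{R}^{2N}$ and state sequences defined by $x[0]=x_0$, $x_{\mathrm a}[0]=\mathbf{0}_{2N}$, $x[k+1]=A(x[k]-u[k])$, $x_{\mathrm a}[k+1]=A_{\mathrm a}(x_{\mathrm a}[k]+u[k])$, such that $0\preceq u[k]\preceq x[k]$ (entrywise)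 for all $k$, and $$\sum_{n=0}^{k-1}c_{\mathrm{ON}}\big(A^{k-n}-A_{\mathrm a}^{k-n}\big)u[n]\ \ge\ P_{\mathrm{hold}}\quad\text{for all }k=1,\dots,T_{\mathrm{hold}}.$$ Call $\bar P_{\mathrm{hold}}\in\mathbb{R}$ feasible for the outer problem if there exist $\bar u[0],\dots,\bar u[T_{\mathrm{hold}}-1]\in\mathbb{R}^{2N}$ with $\bar u[k]\succeq 0$ for all $k$, $\sum_{k=0}^{T_{\mathrm{hold}}-1}\mathbf{1}_{2N}^\top\bar u[k]\le 1$, and $$\sum_{n=0}^{k-1}c_{\mathrm{ON}}\big(A_{\mathrm{out}}^{k-n}-A_{\mathrm a}^{k-n}\big)\bar u[n]\ \ge\ \bar P_{\mathrm{hold}}\quad\text{for all }k=1,\dots,T_{\mathrm{hold}}.$$ Suppose that $h^x_{k-n}\mathbf{1}_{2N}\succeq h_{k-n}-h_{\mathrm a,k-n}$ (entrywise) for all $k\le T_{\mathrm{hold}}$ and all $n<k$. Then the set of values feasible for the full problem is contained in the set of values feasible for the outer problem; in particular the optimal (maximal) value of $\bar P_{\mathrm{hold}}$ in the outer problem is at least the optimal value of $P_{\mathrm{hold}}$ in the full problem, so the reach-and-hold set obtained from the outer problem is an outer approximation of the one obtained from the full problem.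
   Context: Model: a fleet of thermostatically controlled loads is described by a Markov chain on $2N$ temperature bins ($N$ ON bins followed by $N$ OFF bins). $x[k]$ is the distribution of the non-actuated population, $x_{\mathrm a}[k]$ that of the population that has received a setpoint change, $u[k]$ the fraction of each bin actuated at step $k$; $A$ is the transition matrix under the original setpoint, $A_{\mathrm a}$ under the new setpoint, and $A_{\mathrm{out}}$ the transition matrix of an auxiliary (''fictitious'') system (in the paper, one with setpoint $T_{\mathrm{set}}-\Delta T/2$ and deadband equal to one bin width, with $x_{\mathrm{out}}$ the indicator of the bin at temperature $T_{\mathrm{set}}-\Delta T/2$). The quantity $\sum_{n<k}c_{\mathrm{ON}}(A^{k-n}-A_{\mathrm a}^{k-n})u[n]$ is the reduction in aggregate power from the nominal value $c_{\mathrm{ON}}x_0$ at step $k$. The reach-and-hold set is the set of pairs $(P_{\mathrm{hold}},T_{\mathrm{hold}})$ such that $P_{\mathrm{hold}}$ is feasible for the given $T_{\mathrm{hold}}$. *)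

From HB Require Import structures.
From mathcomp Require Import all_boot all_order all_algebra.
Set Implicit Arguments. Unset Strict Implicit. Unset Printing Implicit Defensive.
Import Order.TTheory GRing.Theory Num.Theory.
Local Open Scope ring_scope.

Section Defs.
Variables (R : realFieldType) (d : nat).

(* matrix power M^k (by iteration, since 'M_d need not be a ring syntactically) *)
Definition mxpow (M : 'M[R]_d) (k : nat) : 'M[R]_d := iter k (mulmx M) 1%:M.

Definition nonneg_mx (M : 'M[R]_d) : Prop := forall i j, 0 <= M i j.

Definition col_stochastic (M : 'M[R]_d) : Prop :=
  nonneg_mx M /\ (const_mx 1 : 'rV[R]_d) *m M = const_mx 1.

Fixpoint xstate (A : 'M[R]_d) (x0 : 'cV[R]_d) (u : nat -> 'cV[R]_d) (k : nat)
  : 'cV[R]_d :=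
  match k with
  | 0 => x0
  | k'.+1 => A *m (xstate A x0 u k' - u k')
  end.

Fixpoint xastate (Aa : 'M[R]_d) (u : nat -> 'cV[R]_d) (k : nat) : 'cV[R]_d :=
  match k with
  | 0 => 0
  | k'.+1 => Aa *m (xastate Aa u k' + u k')
  end.

Definition power_red (c : 'rV[R]_d) (B Aa : 'M[R]_d) (u : nat -> 'cV[R]_d)
  (k : nat) : R :=
  \sum_(n < k) (c *m (mxpow B (k - n) - mxpow Aa (k - n)) *m u n) 0 0.

End Defs.

Section Model.
Variables (R : realFieldType) (N : nat).

Definition cON (PON : R) : 'rV[R]_(N + N) :=
  PON *: row_mx (const_mx 1 : 'rV[R]_N) (0 : 'rV[R]_N).

Definition feasible_full (A Aa : 'M[R]_(N + N)) (PON : R) (x0 : 'cV[R]_(N + N))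
  (Thold : nat) (Phold : R) : Prop :=
  exists u : nat -> 'cV[R]_(N + N),
    (forall k, (k < Thold)%N -> forall i,
        0 <= u k i 0 /\ u k i 0 <= xstate A x0 u k i 0) /\
    (forall k, (1 <= k <= Thold)%N -> Phold <= power_red (cON PON) A Aa u k).

Definition feasible_outer (Aout Aa : 'M[R]_(N + N)) (PON : R)
  (Thold : nat) (Pbar : R) : Prop :=
  exists ubar : nat -> 'cV[R]_(N + N),
    (forall k, (k < Thold)%N -> forall i, 0 <= ubar k i 0) /\
    \sum_(k < Thold) \sum_i ubar k i 0 <= 1 /\
    (forall k, (1 <= k <= Thold)%N -> Pbar <= power_red (cON PON) Aout Aa ubar k).

End Model.
Arguments cON {R} N PON.
Arguments feasible_full {R N}.
Arguments feasible_outer {R N}.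

(* Lumping: the outer control puts, at each step, the whole actuated mass
   1^T u[n] of a full-problem control into the single bin j.  Since A is
   column stochastic, the non-actuated mass after k steps is
   1 - sum_(n<k) 1^T u[n]; as u[k] <= x[k], the total actuated mass never
   exceeds 1.  The domination hypothesis bounds each row entry of
   h_m - h_(a,m) by h^x_m, so by nonnegativity of u[n] every summand of the
   full power reduction is at most the corresponding summand for the lumped
   control. *)

From HB Require Import structures.
From mathcomp Require Import all_boot all_order all_algebra.
From mathcomp Require Import lra.
Set Implicit Arguments. Unset Strict Implicit. Unset Printing Implicit Defensive.
Import Order.TTheory GRing.Theory Num.Theory.
Local Open Scope ring_scope.

Section Lumping.
Variables (R : realFieldType) (d : nat).
Implicit Types (M A B Aa : 'M[R]_d) (v w : 'cV[R]_d) (r c : 'rV[R]_d)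
  (u : nat -> 'cV[R]_d).

Definition mass v : R := \sum_i v i 0.

Lemma massB v w : mass (v - w) = mass v - mass w.
Proof. by rewrite /mass -sumrB; apply: eq_bigr => i _; rewrite !mxE. Qed.

Lemma mass_mulmx_stochastic M v :
  (const_mx 1 : 'rV[R]_d) *m M = const_mx 1 -> mass (M *m v) = mass v.
Proof.
move=> stochM.
have massE w : mass w = ((const_mx 1 : 'rV[R]_d) *m w) 0 0.
  by rewrite mxE; apply: eq_bigr => i _; rewrite mxE mul1r.
by rewrite !massE mulmxA stochM.
Qed.

Lemma mass_xstate A (x0 : 'cV[R]_d) u k :
  (const_mx 1 : 'rV[R]_d) *m A = const_mx 1 ->
  mass (xstate A x0 u k) = mass x0 - \sum_(n < k) mass (u n).
Proof.
move=> stochA; elim: k => [|k IHk]; first by rewrite big_ord0 subr0.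
by rewrite /= mass_mulmx_stochastic // massB IHk big_ord_recr /=; lra.
Qed.

Lemma actuated_mass_le A (x0 : 'cV[R]_d) u k :
  (const_mx 1 : 'rV[R]_d) *m A = const_mx 1 ->
  (forall i, u k i 0 <= xstate A x0 u k i 0) ->
  \sum_(n < k.+1) mass (u n) <= mass x0.
Proof.
move=> stochA ux.
have : mass (u k) <= mass (xstate A x0 u k) by apply: ler_sum => i _.
by rewrite mass_xstate // big_ord_recr /=; lra.
Qed.

Definition lump (j : 'I_d) v : 'cV[R]_d := mass v *: delta_mx j 0.

Lemma mass_lump j v : mass (lump j v) = mass v.
Proof.
rewrite /mass (bigD1 j) //= big1 => [|i /negbTE neq_ij].
  by rewrite !mxE !eqxx mulr1 addr0.
by rewrite !mxE neq_ij mulr0.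
Qed.

Lemma lump_ge0 j v : (forall i, 0 <= v i 0) -> forall i, 0 <= lump j v i 0.
Proof.
by move=> v_ge0 i; rewrite !mxE mulr_ge0 ?sumr_ge0 // => [k _|]; case: eqP.
Qed.

Lemma mulmx_le_mass r v a :
  (forall i, r 0 i <= a) -> (forall i, 0 <= v i 0) -> (r *m v) 0 0 <= a * mass v.
Proof.
move=> r_le v_ge0; rewrite mxE /mass mulr_sumr; apply: ler_sum => i _.
by rewrite ler_wpM2r.
Qed.

Lemma power_red_le_lump c B (B' : 'M[R]_d) Aa u j k :
  (forall n, (n < k)%N -> forall i, 0 <= u n i 0) ->
  (forall n, (n < k)%N -> forall i,
     (c *m mxpow B (k - n) - c *m mxpow Aa (k - n)) 0 i
     <= (c *m (mxpow B' (k - n) - mxpow Aa (k - n))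
           *m delta_mx j (0 : 'I_1)) 0 0) ->
  power_red c B Aa u k <= power_red c B' Aa (fun n => lump j (u n)) k.
Proof.
move=> u_ge0 dom; apply: ler_sum => n _.
rewrite /lump -scalemxAr [X in _ <= X]mxE mulrC mulmxBr.
exact: mulmx_le_mass (dom n (ltn_ord n)) (u_ge0 n (ltn_ord n)).
Qed.

End Lumping.

Theorem proposition1 (R : realFieldType) (N : nat) (hN : (1 <= N)%N)
  (A Aa Aout : 'M[R]_(N + N))
  (hA : col_stochastic A) (hAa : col_stochastic Aa) (hAout : col_stochastic Aout)
  (PON : R) (hPON : 0 < PON)
  (x0 : 'cV[R]_(N + N))
  (hx0pos : forall i, 0 <= x0 i 0)
  (hx0sum : \sum_i x0 i 0 = 1)
  (hx0fix : A *m x0 = x0)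
  (j : 'I_(N + N))
  (Thold : nat) (hT : (1 <= Thold)%N)
  (hdom : forall k n, (k <= Thold)%N -> (n < k)%N ->
     forall i,
       (cON N PON *m mxpow A (k - n) - cON N PON *m mxpow Aa (k - n)) 0 i
       <= (cON N PON *m (mxpow Aout (k - n) - mxpow Aa (k - n))
             *m delta_mx j (0 : 'I_1)) 0 0) :
  forall Phold : R,
    feasible_full A Aa PON x0 Thold Phold ->
    feasible_outer Aout Aa PON Thold Phold.
Proof.
move=> P [u [hu hP]].
exists (fun n => lump j (u n)); split; [|split].
- by move=> k hk; apply: lump_ge0 => i; case: (hu k hk i).
- under eq_bigr do rewrite -/(mass _) mass_lump.
  case: Thold hT hu {hdom hP} => // T _ hu.
  rewrite -hx0sum; apply: actuated_mass_le hA.2 _ => i.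
  by case: (hu T (ltnSn T) i).
- move=> k /andP [k_ge1 k_le]; apply: le_trans (hP k _) _; first by rewrite k_ge1.
  apply: power_red_le_lump _ (fun n => hdom k n k_le) => n n_lt i.
  by case: (hu n (leq_trans n_lt k_le) i).
Qed.
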